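(* Let $T\ge 0$ be the number of attacking rounds. If $T=0$, then the privacy leakage is $V_p=0$. Suppose $T>0$ and the assumptions in the context hold. Then $$V_p\ \ge\ \underline V_p:=1-\frac{c_b\Delta+c_bc_2T^{p-1}}{D},$$ and $V_p\le 1$; moreover, if $\Delta\ge\frac{2c_2c_b}{c_a}T^{p-1}$ or $\Delta\le\frac{c_ac_0}{2c_b}T^{p-1}$, then $$V_p\ \le\ \overline V_p:=1-\frac{c_a\Delta+c_ac_0T^{p-1}}{4D}.$$
   Context: A client has original private data $s_o$ and original gradient $w_o=g(s_o)$, where $g(s)=\partial\mathcal L(s,w)/\partial w$. The client releases a protected gradient $w_d$; let $s_d$ be data with $g(s_d)=w_d$, and let the protection extent be $\Delta=\|w_d-w_o\|=\|g(s_d)-g(s_o)\|$. A semi-honest attacker runs an optimization algorithm producing reconstructions $s_1,\dots,s_T$. Privacy leakage: $V_p=1-\frac1D\cdot\frac1T\sum_{t=1}^T\|s_t-s_o\|$ for $T>0$ and $V_p=0$ for $T=0$. Assumptions: constants $D,c_a,c_b,c_0,c_2>0$, $p\in(0,1)$; for all data $s_1,s_2$, $c_a\|g(s_1)-g(s_2)\|\le\|s_1-s_2\|\le c_b\|g(s_1)-g(s_2)\|$ (with $c_a\le c_b$); the regret bound $c_0T^p\le\sum_{t=1}^T\|g(s_t)-g(s_d)\|\le c_2T^p$ holds (with $c_0\le c_2$); $\|s_t-s_o\|\in[0,D]$ for all $t$; and $c_b+c_bc_2\le D$, $\frac{2c_2c_b}{c_a}\le D$. *)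

From HB Require Import structures.
From mathcomp Require Import all_boot all_order all_algebra.
From mathcomp Require Import all_classical all_reals all_analysis.
Set Implicit Arguments. Unset Strict Implicit. Unset Printing Implicit Defensive.
Import Order.TTheory GRing.Theory Num.Theory.
Import numFieldNormedType.Exports.
Local Open Scope ring_scope.

(* Privacy leakage V_p for reconstructions s_1..s_T (s : nat -> S, only
   indices 1..T are used), original data so, normalising constant D. *)
Definition privacy_leakage (R : realType) (S : normedModType R)
  (D : R) (T : nat) (s : nat -> S) (so : S) : R :=
  if T == 0%N then 0
  else 1 - D^-1 * (T%:R)^-1 * \sum_(1 <= t < T.+1) `|s t - so|.

From HB Require Import structures.
From mathcomp Require Import all_boot all_order all_algebra.
From mathcomp Require Import all_classical all_reals all_analysis.
From mathcomp Require Import ring lra.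
Import Order.TTheory GRing.Theory Num.Theory.
Import numFieldNormedType.Exports.
Set Implicit Arguments. Unset Strict Implicit. Unset Printing Implicit Defensive.
Local Open Scope ring_scope.

(* For T > 0 the leakage is V_p = 1 - m / D, where m is the average
   reconstruction error (1/T) sum_t |s_t - s_o|.  Write b for the average
   gradient residual (1/T) sum_t |g s_t - g s_d| and Delta = |g s_d - g s_o|.
   - The bi-Lipschitz property of g and the triangle inequality in the gradient
     space give, term by term,
       ca * | |g s_t - g s_d| - Delta | <= |s_t - s_o| <= cb * (|g s_t - g s_d| + Delta);
     averaging yields  ca * |b - Delta| <= m <= cb * b + cb * Delta.
   - Dividing the regret bounds by T gives  c0 X <= b <= c2 X  with X = T^(p-1).
   - The lower bound on V_p follows from m <= cb * Delta + cb * c2 * X.  In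
     each of the two regimes (Delta large or small compared to X) the quantity
     |b - Delta| is at least a fixed fraction of Delta + c0 X, which is a purely
     real-arithmetic fact and gives the upper bound on V_p. *)

Section Average.
Variable R : realFieldType.

Definition avg (T : nat) (f : nat -> R) : R :=
  T%:R^-1 * \sum_(1 <= t < T.+1) f t.

Lemma sum_avg T f : (0 < T)%N -> \sum_(1 <= t < T.+1) f t = T%:R * avg T f.
Proof.
by move=> T_gt0; rewrite /avg mulrA divff ?mul1r // pnatr_eq0 -lt0n.
Qed.

Lemma avg_affine T a c f : (0 < T)%N ->
  avg T (fun t => a * f t + c) = a * avg T f + c.
Proof.
move=> T_gt0; rewrite /avg big_split /= -mulr_sumr sumr_const_nat subSS subn0.
rewrite mulrDr -[c *+ T]mulr_natl [X in _ + X]mulrA mulVf ?pnatr_eq0 -?lt0n // mul1r.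
by rewrite mulrCA.
Qed.

Lemma ler_avg T f h : (forall t, f t <= h t) -> avg T f <= avg T h.
Proof.
move=> fh; rewrite /avg ler_wpM2l ?invr_ge0 ?ler0n //.
by apply: ler_sum => t _; exact: fh.
Qed.

Lemma ler_norm_avg T f : `|avg T f| <= avg T (fun t => `|f t|).
Proof.
rewrite /avg normrM ger0_norm ?invr_ge0 ?ler0n //.
by rewrite ler_wpM2l ?invr_ge0 ?ler0n // ler_norm_sum.
Qed.

Lemma avg_ge0 T f : (forall t, 0 <= f t) -> 0 <= avg T f.
Proof.
by move=> f_ge0; rewrite mulr_ge0 ?invr_ge0 ?ler0n // sumr_ge0.
Qed.

End Average.

Lemma privacy_leakage_avg (R : realType) (S : normedModType R)
    (D : R) (T : nat) (s : nat -> S) (so : S) : (0 < T)%N ->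
  privacy_leakage D T s so = 1 - avg T (fun t => `|s t - so|) / D.
Proof.
rewrite /privacy_leakage /avg; case: T => [|T] //= _.
by rewrite [_ / D]mulrC !mulrA.
Qed.

Lemma powR_le_sum_avg (R : realType) (T : nat) (c p : R) (f : nat -> R) :
  (0 < T)%N -> 0 < p ->
  (c * T%:R `^ p <= \sum_(1 <= t < T.+1) f t) = (c * T%:R `^ (p - 1) <= avg T f).
Proof.
move=> T_gt0 p_gt0; rewrite sum_avg // -mulr_powRB1 ?ler0n // [c * _]mulrCA.
by rewrite ler_pM2l // ltr0n.
Qed.

Lemma sum_le_powR_avg (R : realType) (T : nat) (c p : R) (f : nat -> R) :
  (0 < T)%N -> 0 < p ->
  (\sum_(1 <= t < T.+1) f t <= c * T%:R `^ p) = (avg T f <= c * T%:R `^ (p - 1)).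
Proof.
move=> T_gt0 p_gt0; rewrite sum_avg // -mulr_powRB1 ?ler0n // [c * _]mulrCA.
by rewrite ler_pM2l // ltr0n.
Qed.

Section BiLipschitz.
Variables (R : realFieldType) (S W : normedModType R) (g : S -> W) (ca cb : R).
Hypothesis g_bilip : forall s1 s2 : S,
  ca * `|g s1 - g s2| <= `|s1 - s2| /\ `|s1 - s2| <= cb * `|g s1 - g s2|.
Variables (so sd : S).

Lemma dist_le_residual (x : S) : 0 <= cb ->
  `|x - so| <= cb * `|g x - g sd| + cb * `|g sd - g so|.
Proof.
move=> cb_ge0; apply: le_trans (proj2 (g_bilip x so)) _.
by rewrite -mulrDr ler_wpM2l // ler_distD.
Qed.

Lemma dist_ge_residual (x : S) : 0 <= ca ->
  ca * `| `|g x - g sd| - `|g sd - g so| | <= `|x - so|.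
Proof.
move=> ca_ge0; apply: le_trans (proj1 (g_bilip x so)).
rewrite ler_wpM2l // [`|g sd - g so|]distrC.
by apply: le_trans (ler_dist_dist _ _) _; rewrite opprB addrA subrK.
Qed.

Lemma avg_error_le (T : nat) (s : nat -> S) : (0 < T)%N -> 0 <= cb ->
  avg T (fun t => `|s t - so|) <=
  cb * avg T (fun t => `|g (s t) - g sd|) + cb * `|g sd - g so|.
Proof.
move=> T_gt0 cb_ge0; rewrite -avg_affine //; apply: ler_avg => t.
exact: dist_le_residual.
Qed.

Lemma avg_error_ge (T : nat) (s : nat -> S) : (0 < T)%N -> 0 <= ca ->
  ca * `|avg T (fun t => `|g (s t) - g sd|) - `|g sd - g so| | <=
  avg T (fun t => `|s t - so|).
Proof.
move=> T_gt0 ca_ge0.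
rewrite -[avg _ _]mul1r -avg_affine //.
apply: le_trans (ler_wpM2l ca_ge0 (ler_norm_avg _ _)) _.
rewrite -[X in X <= _]addr0 -avg_affine //; apply: ler_avg => t.
by rewrite mul1r addr0; exact: dist_ge_residual.
Qed.

End BiLipschitz.

Section Regimes.
Variable R : realFieldType.
Variables (ca cb c0 c2 X Delta b m : R).
Hypotheses (ca_gt0 : 0 < ca) (cab : ca <= cb) (c0_gt0 : 0 < c0).
Hypotheses (X_ge0 : 0 <= X) (m_lo : ca * `|b - Delta| <= m).

(* Strong protection: the residual b is at most half of Delta. *)
Lemma strong_protection_bound : c0 <= c2 -> b <= c2 * X ->
  2 * c2 * cb / ca * X <= Delta -> (ca * Delta + ca * c0 * X) / 4 <= m.
Proof.
move=> c02 b_hi Delta_big.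
have ratio_ge1 : 1 <= cb / ca by rewrite ler_pdivlMr // mul1r.
have c2X_ge0 : 0 <= c2 * X by rewrite mulr_ge0 // ltW // (lt_le_trans c0_gt0).
have Delta_ge : 2 * (c2 * X) <= Delta.
  apply: le_trans Delta_big.
  have -> : 2 * c2 * cb / ca * X = cb / ca * (2 * (c2 * X)) by ring.
  by rewrite ler_peMl // mulr_ge0.
have c0X_le : c0 * X <= c2 * X by rewrite ler_wpM2r.
have gap : ca * (Delta - b) <= m.
  by apply: le_trans _ m_lo; apply: ler_wpM2l; [exact: ltW | rewrite distrC ler_norm].
have := ler_wpM2l (ltW ca_gt0) Delta_ge.
have := ler_wpM2l (ltW ca_gt0) c0X_le.
have := ler_wpM2l (ltW ca_gt0) b_hi.
have := mulr_ge0 (ltW ca_gt0) (mulr_ge0 (ltW c0_gt0) X_ge0).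
lra.
Qed.

(* Weak protection: Delta is at most half of the lower regret level c0 X. *)
Lemma weak_protection_bound : c0 * X <= b -> 0 <= Delta ->
  Delta <= ca * c0 / (2 * cb) * X -> (ca * Delta + ca * c0 * X) / 4 <= m.
Proof.
move=> b_lo Delta_ge0 Delta_small.
have cb_gt0 : 0 < cb := lt_le_trans ca_gt0 cab.
have Delta_le : 2 * Delta <= c0 * X.
  have ratio_le1 : ca / cb <= 1 by rewrite ler_pdivrMr // mul1r.
  have shrink : ca / cb * (c0 * X) <= c0 * X.
    by rewrite ler_piMl // mulr_ge0 // ltW.
  have threshold : ca * c0 / (2 * cb) * X = ca / cb * (c0 * X) / 2.
    by field; rewrite gt_eqF.
  rewrite threshold in Delta_small.
  lra.
have gap : ca * (b - Delta) <= m.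
  by apply: le_trans _ m_lo; apply: ler_wpM2l; [exact: ltW | rewrite ler_norm].
have := ler_wpM2l (ltW ca_gt0) Delta_le.
have := ler_wpM2l (ltW ca_gt0) b_lo.
have := mulr_ge0 (ltW ca_gt0) Delta_ge0.
lra.
Qed.

End Regimes.

Lemma leakage_antitone (R : realFieldType) (D x y : R) : 0 < D -> x <= y ->
  1 - y / D <= 1 - x / D.
Proof. by move=> D_gt0 xy; rewrite lerD2l lerN2 ler_pM2r ?invr_gt0. Qed.

Theorem mainTheorem2 (R : realType) (S W : normedModType R) (g : S -> W)
  (so sd : S) (s : nat -> S) (T : nat) (D ca cb c0 c2 p : R) :
  (T = 0%N -> privacy_leakage D T s so = 0) /\
  ((0 < T)%N ->
   0 < D -> 0 < ca -> 0 < cb -> 0 < c0 -> 0 < c2 -> 0 < p -> p < 1 ->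
   ca <= cb -> c0 <= c2 ->
   (forall s1 s2 : S, ca * `|g s1 - g s2| <= `|s1 - s2| /\
                      `|s1 - s2| <= cb * `|g s1 - g s2|) ->
   c0 * (T%:R `^ p) <= \sum_(1 <= t < T.+1) `|g (s t) - g sd| ->
   \sum_(1 <= t < T.+1) `|g (s t) - g sd| <= c2 * (T%:R `^ p) ->
   (forall t, (1 <= t <= T)%N -> 0 <= `|s t - so| <= D) ->
   cb + cb * c2 <= D -> 2 * c2 * cb / ca <= D ->
   let Delta := `|g sd - g so| in
   let Vp := privacy_leakage D T s so in
   1 - (cb * Delta + cb * c2 * T%:R `^ (p - 1)) / D <= Vp /\
   Vp <= 1 /\
   (2 * c2 * cb / ca * T%:R `^ (p - 1) <= Delta \/
    Delta <= ca * c0 / (2 * cb) * T%:R `^ (p - 1) ->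
    Vp <= 1 - (ca * Delta + ca * c0 * T%:R `^ (p - 1)) / (4 * D))).
Proof.
split; first by move=> ->; rewrite /privacy_leakage eqxx.
move=> T_gt0 D_gt0 ca_gt0 cb_gt0 c0_gt0 c2_gt0 p_gt0 _ cab c02 g_bilip
  regret_lo regret_hi _ _ _ Delta Vp.
set X := T%:R `^ (p - 1).
set m := avg T (fun t => `|s t - so|).
set b := avg T (fun t => `|g (s t) - g sd|).
have Vp_m : Vp = 1 - m / D by exact: privacy_leakage_avg.
have b_lo : c0 * X <= b by rewrite -powR_le_sum_avg.
have b_hi : b <= c2 * X by rewrite -sum_le_powR_avg.
have m_hi : m <= cb * b + cb * Delta.
  by apply: (avg_error_le g_bilip) => //; exact: ltW.
have m_lo : ca * `|b - Delta| <= m.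
  by apply: (avg_error_ge g_bilip) => //; exact: ltW.
have X_ge0 : 0 <= X by exact: powR_ge0.
rewrite Vp_m; split; last split.
- apply: leakage_antitone => //.
  have := ler_wpM2l (ltW cb_gt0) b_hi; lra.
- rewrite lerBlDr lerDl divr_ge0 ?(ltW D_gt0) //.
  by apply: avg_ge0 => t.
- move=> regime; rewrite invfM mulrA; apply: leakage_antitone => //.
  case: regime => [Delta_big | Delta_small].
  + exact: strong_protection_bound ca_gt0 cab c0_gt0 X_ge0 m_lo c02 b_hi Delta_big.
  + have Delta_ge0 : 0 <= Delta by rewrite normr_ge0.
    exact: weak_protection_bound ca_gt0 cab c0_gt0 X_ge0 m_lo b_lo Delta_ge0 Delta_small.
Qed.
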